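(* For $M,N\in\Lambda$ and $A\in\mathcal A$, if $A\sqsubseteq M$ and $M\to_{\mathsf v}N$ then $A\sqsubseteq N$.
   Context: $\lambda$-terms and values are $M,N::=V\mid MN$, $V::=x\mid\lambda x.M$, up to $\alpha$-conversion. Rules: $(\beta_v)$ $(\lambda x.M)V\to M\{x:=V\}$ if $V$ is a value; $(\sigma_1)$ $(\lambda x.M)NP\to(\lambda x.MP)N$ if $x\notin\mathrm{FV}(P)$; $(\sigma_3)$ $V((\lambda x.M)N)\to(\lambda x.VM)N$ if $V$ is a value and $x\notin\mathrm{FV}(V)$. $\to_{\mathsf v}$ is the contextual closure of their union. $\Lambda_\bot$ is the set of $\lambda$-terms possibly containing a constant $\bot$; $\sqsubseteq$ is the smallest context-closed preorder on $\Lambda_\bot$ with $\bot\sqsubseteq x$ and $\bot\sqsubseteq\lambda x.M$ for all variables $x$ and $M\in\Lambda_\bot$. Approximants $\mathcal A$ ($k\ge0$): $A::=B\mid C$; $B::=x\mid\lambda x.A\mid\bot\mid xBA_1\cdots A_k$; $C::=(\lambda x.A)(yBA_1\cdots A_k)$. *)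

(* Lambda-terms with an optional constant Bot, in de Bruijn
   notation (so terms are identified up to alpha-conversion). *)
From Stdlib Require Import Arith.

Inductive term : Type :=
| Var : nat -> term
| Lam : term -> term
| App : term -> term -> term
| Bot : term.

(* Lambda (terms without Bot) *)
Fixpoint no_bot (t : term) : Prop :=
  match t with
  | Var _ => True
  | Lam t => no_bot t
  | App t u => no_bot t /\ no_bot u
  | Bot => False
  end.

Definition is_value (t : term) : Prop :=
  match t with
  | Var _ | Lam _ => True
  | _ => False
  end.

Fixpoint lift (k c : nat) (t : term) : term :=
  match t with
  | Var n => if n <? c then Var n else Var (n + k)
  | Lam t => Lam (lift k (S c) t)
  | App t u => App (lift k c t) (lift k c u)
  | Bot => Bot
  end.

Fixpoint subst_at (k : nat) (s : term) (t : term) : term :=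
  match t with
  | Var n => if n <? k then Var n
             else if n =? k then lift k 0 s
             else Var (n - 1)
  | Lam t => Lam (subst_at (S k) s t)
  | App t u => App (subst_at k s t) (subst_at k s u)
  | Bot => Bot
  end.

(* M{x:=V} where x is the binder of Lam M *)
Definition subst0 (M V : term) : term := subst_at 0 V M.

(* One-step v-reduction: contextual closure of beta_v, sigma_1, sigma_3.
   Side conditions x \notin FV(P) / FV(V) are automatic with lifting. *)
Inductive red_v : term -> term -> Prop :=
| r_beta_v : forall M V, is_value V -> red_v (App (Lam M) V) (subst0 M V)
| r_sigma1 : forall M N P,
    red_v (App (App (Lam M) N) P) (App (Lam (App M (lift 1 0 P))) N)
| r_sigma3 : forall V M N, is_value V ->
    red_v (App V (App (Lam M) N)) (App (Lam (App (lift 1 0 V) M)) N)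
| r_lam : forall M M', red_v M M' -> red_v (Lam M) (Lam M')
| r_appl : forall M M' N, red_v M M' -> red_v (App M N) (App M' N)
| r_appr : forall M N N', red_v N N' -> red_v (App M N) (App M N').

Inductive approx_le : term -> term -> Prop :=
| le_refl : forall M, approx_le M M
| le_trans : forall M N P, approx_le M N -> approx_le N P -> approx_le M P
| le_bot_var : forall x, approx_le Bot (Var x)
| le_bot_lam : forall M, approx_le Bot (Lam M)
| le_lam : forall M N, approx_le M N -> approx_le (Lam M) (Lam N)
| le_appl : forall M M' N, approx_le M M' -> approx_le (App M N) (App M' N)
| le_appr : forall M N N', approx_le N N' -> approx_le (App M N) (App M N').

(* Approximants:
   A ::= B | C
   B ::= x | \x.A | Bot | x B A1 ... Ak
   C ::= (\x.A)(y B A1 ... Ak)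
   is_hd t  means  t = x B A1 ... Ak  (k >= 0). *)
Inductive is_A : term -> Prop :=
| A_B : forall t, is_B t -> is_A t
| A_C : forall t, is_C t -> is_A t
with is_B : term -> Prop :=
| B_var : forall x, is_B (Var x)
| B_lam : forall a, is_A a -> is_B (Lam a)
| B_bot : is_B Bot
| B_hd : forall t, is_hd t -> is_B t
with is_hd : term -> Prop :=
| hd_base : forall x b, is_B b -> is_hd (App (Var x) b)
| hd_app : forall t a, is_hd t -> is_A a -> is_hd (App t a)
with is_C : term -> Prop :=
| C_intro : forall a t, is_A a -> is_hd t -> is_C (App (Lam a) t).

(* The order [approx_le] is structural: [A ⊑ M] iff [M] arises from [A] by
   replacing some occurrences of [Bot] by variables or abstractions.  A head
   application [x B A1 ... Ak] of an approximant can only lie below an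
   application whose head is a variable, hence never below a value nor below
   an application [(λx.M) N]; so no part of an approximant lies below a
   [beta_v]-, [sigma_1]- or [sigma_3]-redex.  Since the immediate subterms of
   approximants are approximants, a reduction inside [M] takes place either
   below a [Bot] of [A], where it is invisible, or inside a subterm approximated
   by a smaller approximant. *)

Inductive approx_struct : term -> term -> Prop :=
| approx_struct_bot_bot : approx_struct Bot Bot
| approx_struct_bot_var x : approx_struct Bot (Var x)
| approx_struct_bot_lam M : approx_struct Bot (Lam M)
| approx_struct_var x : approx_struct (Var x) (Var x)
| approx_struct_lam M N : approx_struct M N -> approx_struct (Lam M) (Lam N)
| approx_struct_app M M' N N' : approx_struct M M' -> approx_struct N N' ->
    approx_struct (App M N) (App M' N').

Lemma approx_struct_refl t : approx_struct t t.
Proof.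
  induction t; constructor; eauto.
Qed.

Lemma approx_struct_trans t u w :
  approx_struct t u -> approx_struct u w -> approx_struct t w.
Proof.
  intros Htu; revert w.
  induction Htu; intros w Huw; inversion Huw; subst; constructor; eauto.
Qed.

Lemma approx_le_struct t u : approx_le t u -> approx_struct t u.
Proof.
  induction 1; try constructor; eauto using approx_struct_refl, approx_struct_trans.
Qed.

Lemma approx_struct_le t u : approx_struct t u -> approx_le t u.
Proof.
  induction 1 as [| | | | |M M' N N' _ IHM _ IHN]; try constructor; auto.
  apply le_trans with (App M' N); constructor; auto.
Qed.

Lemma is_A_app_inv t u : is_A (App t u) ->
  (exists x, t = Var x /\ is_B u) \/ (is_hd t /\ is_A u)
  \/ (exists a, t = Lam a /\ is_A a /\ is_hd u).
Proof.
  intros HA; inversion HA as [? HB|? HC]; subst.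
  - inversion HB as [| | |? Hhd]; subst.
    inversion Hhd; subst; eauto.
  - inversion HC; subst; eauto 10.
Qed.

Lemma is_A_app t u : is_A (App t u) -> is_A t /\ is_A u.
Proof.
  intros HA; apply is_A_app_inv in HA as [[x [-> Hu]]|[[Ht Hu]|[a [-> [Ha Hu]]]]];
    split; auto using A_B, B_var, B_lam, B_hd.
Qed.

Lemma is_A_lam a : is_A (Lam a) -> is_A a.
Proof.
  intros HA; inversion HA as [? HB|? HC]; subst.
  - inversion HB as [| | |? Hhd]; subst; auto; inversion Hhd.
  - inversion HC.
Qed.

Lemma hd_not_approx_value t V : is_hd t -> approx_struct t V -> ~ is_value V.
Proof.
  intros Hhd HtV; destruct Hhd; inversion HtV; subst; simpl; tauto.
Qed.

Lemma hd_not_approx_lam_app t M N : is_hd t -> ~ approx_struct t (App (Lam M) N).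
Proof.
  intros Hhd Ht; destruct Hhd as [x b _|t' a Ht' _];
    inversion Ht as [| | | | |? ? ? ? Hhead _]; subst.
  - inversion Hhead.
  - exact (hd_not_approx_value _ _ Ht' Hhead I).
Qed.

Lemma B_not_approx_lam_app b M N : is_B b -> ~ approx_struct b (App (Lam M) N).
Proof.
  intros HB Hb; destruct HB as [| | |? Hhd]; try solve [inversion Hb].
  exact (hd_not_approx_lam_app _ _ _ Hhd Hb).
Qed.

Lemma approximant_not_approx_beta_v_redex A M V : is_A A -> is_value V ->
  ~ approx_struct A (App (Lam M) V).
Proof.
  intros HA HV HAM; inversion HAM as [| | | | |t ? u ? Ht Hu]; subst.
  apply is_A_app_inv in HA as [[x [-> _]]|[[Hhd _]|[a [-> [_ Hhd]]]]].
  - inversion Ht.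
  - destruct Hhd; inversion Ht.
  - exact (hd_not_approx_value _ _ Hhd Hu HV).
Qed.

Lemma approximant_not_approx_sigma1_redex A M N P : is_A A ->
  ~ approx_struct A (App (App (Lam M) N) P).
Proof.
  intros HA HAM; inversion HAM as [| | | | |t ? u ? Ht _]; subst.
  apply is_A_app_inv in HA as [[x [-> _]]|[[Hhd _]|[a [-> _]]]].
  - inversion Ht.
  - exact (hd_not_approx_lam_app _ _ _ Hhd Ht).
  - inversion Ht.
Qed.

Lemma approximant_not_approx_sigma3_redex A V M N : is_A A -> is_value V ->
  ~ approx_struct A (App V (App (Lam M) N)).
Proof.
  intros HA HV HAM; inversion HAM as [| | | | |t ? u ? Ht Hu]; subst.
  apply is_A_app_inv in HA as [[x [-> HB]]|[[Hhd _]|[a [-> [_ Hhd]]]]].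
  - exact (B_not_approx_lam_app _ _ _ HB Hu).
  - exact (hd_not_approx_value _ _ Hhd Ht HV).
  - exact (hd_not_approx_lam_app _ _ _ Hhd Hu).
Qed.

Lemma approximant_approx_red_v M N : red_v M N ->
  forall A, is_A A -> approx_struct A M -> approx_struct A N.
Proof.
  induction 1 as [M V HV|M N P|V M N HV|M M' _ IH|M M' N _ IH|M N N' _ IH];
    intros A HA HAM.
  - exfalso; exact (approximant_not_approx_beta_v_redex _ _ _ HA HV HAM).
  - exfalso; exact (approximant_not_approx_sigma1_redex _ _ _ _ HA HAM).
  - exfalso; exact (approximant_not_approx_sigma3_redex _ _ _ _ HA HV HAM).
  - inversion HAM; subst; constructor; auto using is_A_lam.
  - inversion HAM; subst; apply is_A_app in HA as [HA _]; constructor; auto.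
  - inversion HAM; subst; apply is_A_app in HA as [_ HA]; constructor; auto.
Qed.

Theorem lemma2p5 (M N A : term) :
  no_bot M -> no_bot N -> is_A A ->
  approx_le A M -> red_v M N -> approx_le A N.
Proof.
  intros _ _ HA HAM HMN.
  apply approx_struct_le, (approximant_approx_red_v M N HMN A HA),
    approx_le_struct, HAM.
Qed.
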